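(* Let $n_1,n_2\ge 1$ be integers, $n=n_1+n_2>3$, and consider a uniformly random arrangement of $n_1$ symbols $x$ and $n_2$ symbols $y$ (all $\binom{n}{n_1}$ arrangements equally likely). Let $R_1$ and $R_2$ be the numbers of runs of $x$'s and of $y$'s, respectively, and $R_M=\max(R_1,R_2)$. Then (i) $\mathrm{Var}(R_M\mid R_1>R_2)=\dfrac{n_2(n_2-1)(n_1-2)(n_1-1)}{(n-2)^2(n-3)}$; (ii) $\mathrm{Var}(R_M\mid R_1<R_2)=\dfrac{n_1(n_1-1)(n_2-2)(n_2-1)}{(n-2)^2(n-3)}$; (iii) $\mathrm{Var}(R_M\mid R_1=R_2)=\dfrac{(n_2-1)^2(n_1-1)^2}{(n-2)^2(n-3)}$.
   Context: A run is a maximal block of consecutive identical symbols in the arrangement. Conditional variances given an event are considered when that event has positive probability. *)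

From HB Require Import structures.
From mathcomp Require Import all_boot all_order all_algebra.
Set Implicit Arguments. Unset Strict Implicit. Unset Printing Implicit Defensive.
Import Order.TTheory GRing.Theory Num.Theory.
Local Open Scope ring_scope.

(* An arrangement of n symbols x (= true) and y (= false) is a bool sequence. *)
Definition runs (b : bool) (s : seq bool) : nat :=
  count (fun i => (nth false s i == b) && ((i == 0)%N || (nth false s i.-1 != b)))
        (iota 0 (size s)).

Definition arrangements (n1 n2 : nat) : {set (n1 + n2).-tuple bool} :=
  [set s : (n1 + n2).-tuple bool | count id s == n1].

(* Conditional expectation / variance of X under the uniform distribution on a
   finite set A, conditioned on the event A (assumed nonempty). *)
Definition cond_mean (T : finType) (A : {set T}) (X : T -> rat) : rat :=
  (\sum_(t in A) X t) / #|A|%:R.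

Definition cond_var (T : finType) (A : {set T}) (X : T -> rat) : rat :=
  cond_mean A (fun t => (X t - cond_mean A X) ^+ 2).

Definition R1 (n : nat) (s : n.-tuple bool) : nat := runs true s.
Definition R2 (n : nat) (s : n.-tuple bool) : nat := runs false s.
Definition RM (n : nat) (s : n.-tuple bool) : rat := (maxn (R1 s) (R2 s))%:R.

From HB Require Import structures.
From mathcomp Require Import all_boot all_order all_algebra.
From mathcomp Require Import ring lra zify.
Import Order.TTheory GRing.Theory Num.Theory.
Local Open Scope ring_scope.

(* R1 - R2 = [s starts with x] + [s ends with x] - 1.  Hence R1 > R2, R1 < R2 and R1 = R2 mean
   that the arrangement starts and ends with x, starts and ends with y, or has distinct end
   symbols, and on these events R_M is R2 + 1, R2 and R2 respectively.  Each conditional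
   variance is therefore the variance of the number R2 of y-runs over the arrangements with
   prescribed end symbols, which is determined by the sums of 'C(R2, r) for r <= 2.  Deleting
   the first symbol yields recurrences for these sums in the numbers of x's and y's; they are
   solved by closed forms in the binomial coefficients 'C(x + y, x), and checking the
   recurrences reduces to Pascal's rule and the absorption identities. *)

(* Extended by zero to negative arguments, so that absorption holds everywhere and Pascal's
   rule everywhere except at the origin. *)
Definition binz (x y : int) : rat :=
  if (0 <= x) && (0 <= y) then 'C(`|x| + `|y|, `|x|)%:R else 0.

Lemma binz_nat (a b : nat) : binz a b = 'C(a + b, a)%:R.
Proof. by []. Qed.

Lemma binz_negl a y : binz (Negz a) y = 0.
Proof. by []. Qed.

Lemma binz_negr x a : binz x (Negz a) = 0.
Proof. by rewrite /binz andbF. Qed.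

Lemma Posz0B1 : Posz 0 - 1 = Negz 0.
Proof. by []. Qed.

Lemma PoszSB1 (a : nat) : Posz a.+1 - 1 = Posz a.
Proof. by rewrite -addn1 PoszD addrK. Qed.

Lemma PoszS (a : nat) : Posz a.+1 = Posz a + 1.
Proof. by rewrite -addn1 PoszD. Qed.

Lemma NegzB1 (a : nat) : Negz a - 1 = Negz a.+1.
Proof. by rewrite !NegzE; lia. Qed.

Lemma mul_binzl x y : x%:~R * binz x y = (x + y)%:~R * binz (x - 1) y.
Proof.
case: x => [[|a]|a]; last by rewrite NegzB1 !binz_negl !mulr0.
  by rewrite Posz0B1 binz_negl mul0r mulr0.
case: y => [b|b]; last by rewrite !binz_negr !mulr0.
rewrite PoszSB1 !binz_nat -PoszD !pmulrn -!natrM; congr (_%:R).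
by have := mul_bin_diag (a.+1 + b) a; rewrite addSn /= => ->; rewrite mulnC.
Qed.

Lemma mul_binzr x y : y%:~R * binz x y = (x + y)%:~R * binz x (y - 1).
Proof.
case: y => [[|b]|b]; last by rewrite NegzB1 !binz_negr !mulr0.
  by rewrite Posz0B1 binz_negr mul0r mulr0.
case: x => [a|a]; last by rewrite !binz_negl !mulr0.
rewrite PoszSB1 !binz_nat -PoszD !pmulrn -!natrM; congr (_%:R).
have := mul_bin_down (a + b.+1) a; rewrite addnS /= => ->.
by rewrite -addnS addKn mulnC.
Qed.

Lemma binzS x y : (x != 0) || (y != 0) -> binz x y = binz (x - 1) y + binz x (y - 1).
Proof.
case: x => [[|a]|a]; last by rewrite NegzB1 !binz_negl addr0.
  case: y => [[|b]|b] // _.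
  by rewrite Posz0B1 PoszSB1 binz_negl add0r !binz_nat !bin0.
case: y => [[|b]|b] _; last by rewrite NegzB1 !binz_negr addr0.
  by rewrite Posz0B1 PoszSB1 binz_negr addr0 !binz_nat !addn0 !binn.
rewrite !PoszSB1 !binz_nat -natrD addSn binS.
by rewrite addnS addSn addnC.
Qed.

(* Each recurrence between closed forms below is a linear combination, with coefficients
   rational in x and y, of instances of Pascal's rule and absorption; [field] checks it. *)
Lemma eq_lincomb {a b e : rat} : e = 0 -> a - b = e -> a = b.
Proof. by move=> e0 abe; apply/eqP; rewrite -subr_eq0 abe e0. Qed.

Lemma eq0_add {e1 e2 : rat} : e1 = 0 -> e2 = 0 -> e1 + e2 = 0.
Proof. by move=> -> ->; rewrite addr0. Qed.

Lemma eq0_mull (c : rat) {e : rat} : e = 0 -> c * e = 0.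
Proof. by move=> ->; rewrite mulr0. Qed.

Lemma binz_absorbl x y x' : x' = x - 1 ->
  x%:~R * binz x y - (x + y)%:~R * binz x' y = 0.
Proof. by move=> ->; rewrite mul_binzl subrr. Qed.

Lemma binz_absorbr x y y' : y' = y - 1 ->
  y%:~R * binz x y - (x + y)%:~R * binz x y' = 0.
Proof. by move=> ->; rewrite mul_binzr subrr. Qed.

Lemma binz_pascal x y x' y' : x' = x - 1 -> y' = y - 1 -> (x != 0) || (y != 0) ->
  binz x y - binz x' y - binz x y' = 0.
Proof. by move=> -> -> /binzS ->; ring. Qed.

Lemma binz_pascal_mull x y x' y' : x' = x - 1 -> y' = y - 1 ->
  x%:~R * (binz x y - binz x' y - binz x y') = 0.
Proof.
move=> -> ->; have [->|x0] := eqVneq x 0; first by rewrite mul0r.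
by rewrite binzS ?x0 //; ring.
Qed.

(* The closed form of [fmom r f l (x + y).+2 x.+1]: there are x + 1 symbols x and y + 1
   symbols y. *)
Definition fmom_cf (r : nat) (f l : bool) (x y : int) : rat :=
  let X : rat := x%:~R in let Y : rat := y%:~R in
  match r with
  | 0%N => if f && l then binz (x - 1) (y + 1)
           else if f != l then binz x y else binz (x + 1) (y - 1)
  | 1%N => if f && l then X * binz (x - 1) y
           else if f != l then X * binz x (y - 1) + binz x y
           else Y * binz x (y - 1) + binz (x + 1) (y - 1)
  | _ => if f && l then X * (X - 1) / 2 * binz (x - 1) (y - 1)
         else if f != l then X * (X - 1) / 2 * binz x (y - 2) + X * binz x (y - 1)
         else Y * (Y - 1) / 2 * binz (x - 1) (y - 1) + Y * binz x (y - 1)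
  end.

Lemma addr1_neq0 {y : int} : 0 <= y -> y + 1 != 0.
Proof. by move=> y0; rewrite gt_eqF // ltr_wpDl. Qed.

Lemma fmom_cf_recx r l (x y : int) : 0 <= x -> 0 <= y -> (r <= 2)%N ->
  fmom_cf r true l (x + 1) y = fmom_cf r true l x y + fmom_cf r false l x y.
Proof.
move=> x0 y0; have x1 := addr1_neq0 x0; have y1 := addr1_neq0 y0.
case: r => [|[|[|//]]] _; case: l; rewrite /fmom_cf /= ?addrK.
- have H := binz_pascal x (y + 1) (x - 1) y erefl ltac:(ring) ltac:(by rewrite y1 orbT).
  by apply: (eq_lincomb H); field.
- have H := binz_pascal (x + 1) y x (y - 1) ltac:(ring) erefl ltac:(by rewrite x1).
  by apply: (eq_lincomb H); field.
- by apply: (eq_lincomb (binz_pascal_mull x y (x - 1) (y - 1) erefl erefl)); field.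
- have H1 := binz_pascal (x + 1) y x (y - 1) ltac:(ring) erefl ltac:(by rewrite x1).
  have H2 := binz_absorbl (x + 1) (y - 1) x ltac:(ring).
  by apply: (eq_lincomb (eq0_add H1 H2)); field.
- have H := binz_pascal_mull x (y - 1) (x - 1) (y - 2) erefl ltac:(ring).
  by apply: (eq_lincomb (eq0_mull ((x%:~R - 1) / 2) H)); field.
- have H1 := binz_absorbl (x + 1) (y - 1) x ltac:(ring).
  have H2 := binz_absorbl (x + 1) (y - 2) x ltac:(ring).
  have H3 := binz_absorbl x (y - 2) (x - 1) erefl.
  have H4 := binz_absorbr (x - 1) (y - 1) (y - 2) ltac:(ring).
  apply: (eq_lincomb (eq0_add (eq0_add H1 (eq0_mull (x%:~R / 2) H2))
                              (eq0_mull (y%:~R / 2) (eq0_add H3 (eq0_mull (-1) H4))))).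
  by field.
Qed.

Lemma fmom_cf_recy r l (x y : int) : 0 <= x -> 0 <= y -> (r <= 2)%N ->
  fmom_cf r false l x (y + 1) = fmom_cf r false l x y + fmom_cf r true l x y
                                + (if r is r'.+1 then fmom_cf r' true l x y else 0).
Proof.
move=> x0 y0; have x1 := addr1_neq0 x0; have y1 := addr1_neq0 y0.
have y2 : y + 1 - 2 = y - 1 by ring.
case: r => [|[|[|//]]] _; case: l; rewrite /fmom_cf /= ?addrK ?y2 ?addr0.
- have H := binz_pascal x (y + 1) (x - 1) y erefl ltac:(ring) ltac:(by rewrite y1 orbT).
  by apply: (eq_lincomb H); field.
- have H := binz_pascal (x + 1) y x (y - 1) ltac:(ring) erefl ltac:(by rewrite x1).
  by apply: (eq_lincomb H); field.
- have H1 := binz_pascal x (y + 1) (x - 1) y erefl ltac:(ring) ltac:(by rewrite y1 orbT).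
  have H2 := binz_pascal_mull x y (x - 1) (y - 1) erefl erefl.
  by apply: (eq_lincomb (eq0_add H1 H2)); field.
- have H1 := binz_pascal (x + 1) y x (y - 1) ltac:(ring) erefl ltac:(by rewrite x1).
  have H2 := binz_absorbr x y (y - 1) erefl.
  by apply: (eq_lincomb (eq0_add H1 H2)); field.
- have H1 := binz_pascal_mull x (y - 1) (x - 1) (y - 2) erefl ltac:(ring).
  have H2 := binz_pascal_mull x y (x - 1) (y - 1) erefl erefl.
  by apply: (eq_lincomb (eq0_add (eq0_mull ((x%:~R - 1) / 2) H1) H2)); field.
- have H1 := binz_absorbr x y (y - 1) erefl.
  have H2 := binz_absorbr (x - 1) y (y - 1) erefl.
  have H3 := binz_pascal_mull x (y - 1) (x - 1) (y - 2) erefl ltac:(ring).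
  have H4 := binz_absorbr (x - 1) (y - 1) (y - 2) ltac:(ring).
  have H5 := binz_absorbl x (y - 2) (x - 1) erefl.
  apply: (eq_lincomb (eq0_add (eq0_add H1 (eq0_mull ((y%:~R + 1) / 2) H2))
     (eq0_add (eq0_mull (-1) H3) (eq0_mull ((x%:~R + 1) / 2) (eq0_add H4 (eq0_mull (-1) H5)))))).
  by field.
Qed.

Lemma runs_cons b c s :
  runs b (c :: s) =
  ((if (c == b) && (head (~~ b) s == b) then 0 else (c == b : nat)) + runs b s)%N.
Proof.
rewrite /runs /=; case: s => [|d s] /=; first by case: c; case: b.
rewrite -(add1n 1) iotaDl count_map.
pose F t i := (nth false t i == b) && ((i == 0)%N || (nth false t i.-1 != b)).
have -> : count (preim (addn 1) (F [:: c, d & s])) (iota 1 (size s))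
        = count (F (d :: s)) (iota 1 (size s)).
  by apply: eq_in_count => -[|i] //; rewrite mem_iota.
by rewrite {}/F; case: c; case: d; case: b.
Qed.

Lemma runs_nseq b c n : runs b (nseq n.+1 c) = (c == b : nat).
Proof.
elim: n => [|n IH]; first by rewrite runs_cons /=; case: c; case: b.
by rewrite [nseq _ _]/= runs_cons IH /=; move: IH; case: c; case: b.
Qed.

Lemma last_nseq (x c : bool) n : last x (nseq n.+1 c) = c.
Proof. by elim: n x => [|n IH] x //; exact: IH. Qed.

Lemma runs_true_false c s :
  (runs true (c :: s) + 1 = runs false (c :: s) + c + last c s)%N.
Proof.
elim: s c => [|d s IH] c; first by case: c.
rewrite runs_cons [runs false _]runs_cons /=.
by move: (IH d); case: c; case: d => /=; lia.
Qed.

Definition ends (f l : bool) (s : seq bool) : bool :=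
  [&& (0 < size s)%N, head false s == f & last false s == l].

Section RunsAndEnds.

Variables (c : bool) (s : seq bool).

Lemma runs_gt_ends : (runs false (c :: s) < runs true (c :: s))%N = ends true true (c :: s).
Proof. by have := runs_true_false c s; rewrite /ends /=; case: c; case: (last _ s) => /=; lia. Qed.

Lemma runs_lt_ends : (runs true (c :: s) < runs false (c :: s))%N = ends false false (c :: s).
Proof. by have := runs_true_false c s; rewrite /ends /=; case: c; case: (last _ s) => /=; lia. Qed.

Lemma runs_eq_ends : (runs true (c :: s) == runs false (c :: s)) =
  ends true false (c :: s) || ends false true (c :: s).
Proof.
have := runs_true_false c s; rewrite /ends /=.
by case: c; case: (last _ s) => /=; lia.
Qed.

Lemma maxn_runs :
  maxn (runs true (c :: s)) (runs false (c :: s)) =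
  (runs false (c :: s) + ends true true (c :: s))%N.
Proof. by have := runs_true_false c s; rewrite /ends /=; case: c; case: (last _ s) => /=; lia. Qed.

End RunsAndEnds.

Fixpoint arrseq (n a : nat) : seq (seq bool) :=
  match n with
  | 0 => if a == 0 then [:: [::]] else [::]
  | n'.+1 => (if a is a'.+1 then map (cons true) (arrseq n' a') else [::])
             ++ map (cons false) (arrseq n' a)
  end.

Lemma mem_map_cons (T : eqType) (b : T) (L : seq (seq T)) c s :
  (c :: s \in map (cons b) L) = (c == b) && (s \in L).
Proof.
apply/mapP/andP => [[t tL [-> ->]]|[/eqP -> sL]]; first by [].
by exists s.
Qed.

Lemma mem_arrseq n a s : (s \in arrseq n a) = (size s == n) && (count id s == a).
Proof.
elim: n a s => [|n IH] a s /=.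
  case: a => [|a] /=; first by rewrite inE; case: s.
  by rewrite in_nil; case: s => [|c s] //=; rewrite andbF.
rewrite mem_cat; case: s => [|c s] /=.
  apply/negbTE; rewrite negb_or; apply/andP; split; last by apply/mapP => -[].
  by case: a => [|a] //; apply/mapP => -[].
case: a => [|a] /=; rewrite ?mem_map_cons IH eqSS; case: c => //=.
all: by rewrite ?orbF ?add1n ?eqSS ?andbF.
Qed.

Lemma uniq_arrseq n a : uniq (arrseq n a).
Proof.
elim: n a => [|n IH] a /=; first by case: (a == 0).
have cons_inj (b : bool) : injective (cons b) by move=> x y [].
rewrite cat_uniq (map_inj_uniq (cons_inj false)) IH andbT.
case: a => [|a] /=; first by apply/hasPn => x _; rewrite in_nil.
rewrite map_inj_uniq // IH /=.
by apply/hasPn => s /mapP [t _ ->]; apply/mapP => -[u _ []].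
Qed.

Lemma arrseq0 n : arrseq n 0 = [:: nseq n false].
Proof. by elim: n => [|n IH] //=; rewrite IH. Qed.

Lemma arrseq_gt n a : (n < a)%N -> arrseq n a = [::].
Proof.
move=> na; case E: (arrseq n a) => [|s l] //.
have : s \in arrseq n a by rewrite E inE eqxx.
rewrite mem_arrseq => /andP [/eqP s_n /eqP s_a].
by have := count_size id s; rewrite s_n s_a leqNgt na.
Qed.

Lemma arrseqnn n : arrseq n n = [:: nseq n true].
Proof. by elim: n => [|n IH] //=; rewrite IH arrseq_gt. Qed.

Definition fmom (r : nat) (f l : bool) (n a : nat) : rat :=
  \sum_(s <- arrseq n a | ends f l s) 'C(runs false s, r)%:R.

Lemma big_arrseqS n a (F : seq bool -> rat) :
  \sum_(s <- arrseq n.+1 a) F s =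
  (if a is a'.+1 then \sum_(s <- arrseq n a') F (true :: s) else 0)
  + \sum_(s <- arrseq n a) F (false :: s).
Proof. by case: a => [|a]; rewrite /= ?big_cat !big_map ?add0r. Qed.

Lemma fmom_recx r l n a :
  fmom r true l n.+2 a.+1 = fmom r true l n.+1 a + fmom r false l n.+1 a.
Proof.
rewrite /fmom big_mkcond big_arrseqS [X in _ + X]big1 // addr0.
rewrite [X in _ = X + _]big_mkcond [X in _ = _ + X]big_mkcond -big_split.
apply: eq_big_seq => s; rewrite mem_arrseq => /andP [/eqP + _].
case: s => [|d s] // _; rewrite /ends /= runs_cons /= add0n.
by case: d; case: (last _ s == l); rewrite ?addr0 ?add0r.
Qed.

Lemma fmom_recy r l n a :
  fmom r false l n.+2 a = fmom r false l n.+1 a + fmom r true l n.+1 a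
                          + (if r is r'.+1 then fmom r' true l n.+1 a else 0).
Proof.
rewrite /fmom big_mkcond big_arrseqS.
rewrite (_ : (if a is _.+1 then _ else _) = 0) ?add0r; last by case: a => //= a; rewrite big1.
rewrite [X in _ = X + _ + _]big_mkcond [X in _ = _ + X + _]big_mkcond.
case: r => [|r]; last rewrite [X in _ = _ + X]big_mkcond; rewrite ?addr0 -!big_split.
all: apply: eq_big_seq => s; rewrite mem_arrseq => /andP [/eqP + _].
all: case: s => [|d s] // _; rewrite /ends /= runs_cons /=.
- by rewrite !bin0; case: d; case: (last _ s == l); rewrite ?addr0 ?add0r.
- by case: d; case: (last _ s == l); rewrite ?addr0 ?add0r ?add1n ?binS ?natrD.
Qed.

Lemma fmom_all_y r f l n :
  fmom r f l n.+1 0 = (if ~~ f && ~~ l then 'C(1, r)%:R else 0).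
Proof.
rewrite /fmom arrseq0 big_mkcond big_seq1 /ends last_nseq runs_nseq /=.
by case: f; case: l.
Qed.

Lemma fmom_all_x r f l n :
  fmom r f l n.+1 n.+1 = (if f && l then 'C(0, r)%:R else 0).
Proof.
rewrite /fmom arrseqnn big_mkcond big_seq1 /ends last_nseq runs_nseq /=.
by case: f; case: l.
Qed.

Lemma fmom_one_x r l n : fmom r true l n.+2 1 = (if l then 0 else 'C(1, r)%:R).
Proof. by rewrite fmom_recx !fmom_all_y /= add0r; case: l. Qed.

Lemma fmom_one_y r l n : fmom r false l n.+2 n.+1 = (if l then 'C(1, r)%:R else 0).
Proof.
rewrite fmom_recy.
by case: r => [|[|r]]; rewrite !fmom_all_x /=; case: l; rewrite ?add0r ?addr0.
Qed.

Lemma fmomE r f l (x y : nat) : (r <= 2)%N ->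
  fmom r f l (x + y).+2 x.+1 = fmom_cf r f l x y.
Proof.
have := ltnSn (x + y); move: {2}(x + y).+1 => n.
elim: n x y r f l => [//|n IH] x y r [] l xyn r2.
- case: x xyn => [|x] xyn.
    rewrite add0n fmom_one_x.
    case: r r2 => [|[|[|//]]] _; case: l;
      rewrite /fmom_cf /= ?Posz0B1 ?binz_negl ?mul0r ?add0r ?binz_nat ?bin0 //.
  by rewrite addSn fmom_recx !IH // ?PoszS ?fmom_cf_recx // -ltnS -addSn.
case: y xyn => [|y] xyn.
  rewrite addn0 fmom_one_y.
  case: r r2 => [|[|[|//]]] _; case: l; rewrite /fmom_cf /= ?Posz0B1 ?binz_negr
    ?mul0r ?mulr0 ?add0r ?addr0 ?binz_nat ?bin0 ?addn0 ?binn //.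
have xyn' : (x + y < n)%N by rewrite -ltnS -addnS.
rewrite addnS PoszS fmom_recy !IH // fmom_cf_recy //.
by case: r r2 => [|r] r2; rewrite ?IH // ltnW.
Qed.

Lemma natr_bin2 (k : nat) : 'C(k, 2)%:R = k%:R * (k%:R - 1) / 2 :> rat.
Proof.
elim: k => [|k IH]; first by rewrite bin0n !mul0r.
by rewrite binS bin1 natrD IH -addn1 natrD; field.
Qed.

Definition fmom_var (F0 F1 F2 : rat) : rat := (2 * F2 + F1) / F0 - (F1 / F0) ^+ 2.

Section ConditionalVariance.

Variables (T : finType) (A : {set T}).

Lemma eq_cond_var (X Y : T -> rat) : {in A, X =1 Y} -> cond_var A X = cond_var A Y.
Proof.
move=> XY; have mXY : cond_mean A X = cond_mean A Y.
  by rewrite /cond_mean (eq_bigr _ XY).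
rewrite /cond_var mXY {1 3}/cond_mean; congr (_ / _).
by apply: eq_bigr => t tA; rewrite XY.
Qed.

Lemma cond_varE (X : T -> rat) :
  cond_var A X = (\sum_(t in A) X t ^+ 2) / #|A|%:R
                 - ((\sum_(t in A) X t) / #|A|%:R) ^+ 2.
Proof.
rewrite /cond_var /cond_mean; set N := #|A|%:R; set S := \sum_(t in A) X t.
have -> : \sum_(t in A) (X t - S / N) ^+ 2
          = \sum_(t in A) X t ^+ 2 - 2 * (S / N) * S + (S / N) ^+ 2 * N.
  rewrite (eq_bigr (fun t => X t ^+ 2 - 2 * (S / N) * X t + (S / N) ^+ 2));
    last by move=> t _; ring.
  by rewrite big_split sumrB /= -mulr_sumr sumr_const /N /S; ring.
have [->|N0] := eqVneq N 0; first by rewrite !invr0 !mulr0 expr0n /= subr0.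
by field.
Qed.

Lemma cond_var_addr (X : T -> rat) (c : rat) :
  cond_var A (fun t => X t + c) = cond_var A X.
Proof.
rewrite !cond_varE; set N := #|A|%:R.
have -> : \sum_(t in A) (X t + c) = \sum_(t in A) X t + c * N.
  by rewrite big_split sumr_const mulr_natr.
have -> : \sum_(t in A) (X t + c) ^+ 2
          = \sum_(t in A) X t ^+ 2 + 2 * c * \sum_(t in A) X t + c ^+ 2 * N.
  rewrite (eq_bigr (fun t => X t ^+ 2 + 2 * c * X t + c ^+ 2)) => [|t _]; last by ring.
  by rewrite !big_split /= -mulr_sumr sumr_const mulr_natr.
have [->|N0] := eqVneq N 0; first by rewrite !invr0 !mulr0.
by field.
Qed.

Lemma cond_var_nat (k : T -> nat) :
  cond_var A (fun t => (k t)%:R) =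
  fmom_var (\sum_(t in A) 'C(k t, 0)%:R) (\sum_(t in A) 'C(k t, 1)%:R)
           (\sum_(t in A) 'C(k t, 2)%:R).
Proof.
have F0 : \sum_(t in A) 'C(k t, 0)%:R = #|A|%:R :> rat.
  by rewrite (eq_bigr (fun=> 1)) => [|t _]; rewrite ?sumr_const ?bin0.
have F1 : \sum_(t in A) 'C(k t, 1)%:R = \sum_(t in A) (k t)%:R :> rat.
  by apply: eq_bigr => t _; rewrite bin1.
rewrite cond_varE /fmom_var F0 F1; congr (_ / _ - _).
rewrite mulr_sumr -big_split; apply: eq_bigr => t _.
by rewrite /= natr_bin2; field.
Qed.

End ConditionalVariance.

Lemma fmom_varZ (c F0 F1 F2 : rat) : c != 0 ->
  fmom_var (c * F0) (c * F1) (c * F2) = fmom_var F0 F1 F2.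
Proof.
move=> c0; rewrite /fmom_var; have [->|F00] := eqVneq F0 0.
  by rewrite mulr0 !invr0 !mulr0.
by field; apply/andP.
Qed.

Lemma sum_arrangements n1 n2 r (P : pred (seq bool)) :
  \sum_(t in arrangements n1 n2 :&: [set s : (n1 + n2).-tuple bool | P s]) 'C(R2 t, r)%:R =
  \sum_(s <- arrseq (n1 + n2) n1 | P s) 'C(runs false s, r)%:R :> rat.
Proof.
have perm_arr : perm_eq (arrseq (n1 + n2) n1)
    (map val (enum (arrangements n1 n2))).
  apply: uniq_perm; first exact: uniq_arrseq.
    by rewrite map_inj_uniq ?enum_uniq //; apply: val_inj.
  move=> s; rewrite mem_arrseq; apply/andP/mapP => [[/eqP sn sa]|[t]].
    by exists (Tuple (introT eqP sn)); rewrite // mem_enum inE.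
  by rewrite mem_enum inE => ta ->; rewrite size_tuple.
rewrite (perm_big _ perm_arr) big_map big_enum_cond /=.
by apply: eq_bigl => t; rewrite !inE.
Qed.

Lemma sum_arrseq_ends n a r f l (P : pred (seq bool)) :
  {in [pred s | size s == n], P =1 ends f l} ->
  \sum_(s <- arrseq n a | P s) 'C(runs false s, r)%:R = fmom r f l n a.
Proof.
move=> PE; rewrite /fmom big_seq_cond [RHS]big_seq_cond; apply: eq_bigl => s.
by case: (boolP (s \in _)) => //; rewrite mem_arrseq => /andP [sn _]; rewrite PE.
Qed.

Lemma cond_var_RM_gt A B :
  cond_var (arrangements A.+1 B.+1 :&: [set s | (R2 s < R1 s)%N]) (@RM _) =
  fmom_var (fmom_cf 0 true true A B) (fmom_cf 1 true true A B) (fmom_cf 2 true true A B).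
Proof.
rewrite (@eq_cond_var _ _ _ (fun t => (R2 t)%:R + 1)) => [|t]; last first.
  rewrite !inE /RM /R1 /R2 => /andP [_]; case: t => -[|c s] //= _.
  by rewrite runs_gt_ends maxn_runs => ->; rewrite natrD.
have Fr r : (r <= 2)%N -> \sum_(t in arrangements A.+1 B.+1 :&: [set s | (R2 s < R1 s)%N])
    'C(R2 t, r)%:R = fmom_cf r true true A B.
  move=> r2; rewrite (sum_arrangements _ _ _ (fun s => runs false s < runs true s)%N).
  rewrite addSn addnS (sum_arrseq_ends _ _ _ true true) ?fmomE // => -[|c s] //= _.
  exact: runs_gt_ends.
by rewrite cond_var_addr cond_var_nat !Fr.
Qed.

Lemma cond_var_RM_lt A B :
  cond_var (arrangements A.+1 B.+1 :&: [set s | (R1 s < R2 s)%N]) (@RM _) =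
  fmom_var (fmom_cf 0 false false A B) (fmom_cf 1 false false A B)
           (fmom_cf 2 false false A B).
Proof.
rewrite (@eq_cond_var _ _ _ (fun t => (R2 t)%:R)) => [|t]; last first.
  rewrite !inE /RM /R1 /R2 => /andP [_]; case: t => -[|c s] //= _.
  by rewrite runs_lt_ends maxn_runs /ends => /and3P [_ /eqP -> _]; rewrite addn0.
have Fr r : (r <= 2)%N -> \sum_(t in arrangements A.+1 B.+1 :&: [set s | (R1 s < R2 s)%N])
    'C(R2 t, r)%:R = fmom_cf r false false A B.
  move=> r2; rewrite (sum_arrangements _ _ _ (fun s => runs true s < runs false s)%N).
  rewrite addSn addnS (sum_arrseq_ends _ _ _ false false) ?fmomE // => -[|c s] //= _.
  exact: runs_lt_ends.
by rewrite cond_var_nat !Fr.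
Qed.

Lemma cond_var_RM_eq A B :
  cond_var (arrangements A.+1 B.+1 :&: [set s | R1 s == R2 s]) (@RM _) =
  fmom_var (fmom_cf 0 true false A B) (fmom_cf 1 true false A B)
           (fmom_cf 2 true false A B).
Proof.
rewrite (@eq_cond_var _ _ _ (fun t => (R2 t)%:R)) => [|t]; last first.
  rewrite !inE /RM /R1 /R2 => /andP [_]; case: t => -[|c s] //= _.
  rewrite runs_eq_ends maxn_runs /ends /=.
  by case: c; case: (last _ s); rewrite //= addn0.
have Fr r : (r <= 2)%N -> \sum_(t in arrangements A.+1 B.+1 :&: [set s | R1 s == R2 s])
    'C(R2 t, r)%:R = 2 * fmom_cf r true false A B.
{ move=> r2; rewrite (sum_arrangements _ _ _ (fun s => runs true s == runs false s)).
  rewrite (bigID (ends true false)) addSn addnS.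
  rewrite (sum_arrseq_ends _ _ _ true false) ?(sum_arrseq_ends _ _ _ false true) ?fmomE //.
  - by rewrite /= mulr_natl mulr2n; congr (_ + _); case: r {r2} => [|[|r]].
  all: move=> -[|c s] //= _; rewrite runs_eq_ends /ends /=.
  all: by case: c; case: (last _ s). }
by rewrite cond_var_nat !Fr // fmom_varZ.
Qed.

Lemma eq_div_of_mul (a b u v : rat) : a != 0 -> a * u = b * v -> u = b / a * v.
Proof. by move=> a0 auv; rewrite mulrAC -auv; field. Qed.

Lemma fmom_var_ends_xx (A B : nat) : (2 <= A + B)%N ->
  fmom_var (fmom_cf 0 true true A B) (fmom_cf 1 true true A B) (fmom_cf 2 true true A B) =
  (B%:R + 1) * B%:R * (A%:R - 1) * A%:R / ((A%:R + B%:R) ^+ 2 * (A%:R + B%:R - 1)).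
Proof.
rewrite /fmom_cf /=; case: A => [|a] AB.
  by rewrite Posz0B1 !binz_negl /fmom_var !(mulr0, mul0r) subrr.
rewrite PoszSB1; set Q := binz a B.
have Q0 : Q != 0 by rewrite /Q binz_nat pnatr_eq0 -lt0n bin_gt0 leq_addr.
have aB1 : (1 <= a%:R + B%:R :> rat) by rewrite -natrD ler1n; lia.
have B0 : (0 <= B%:R :> rat) by rewrite ler0n.
have E1 : binz a (B%:Z + 1) = (a%:R + B%:R + 1) / (B%:R + 1) * Q.
  apply: eq_div_of_mul; first by apply/eqP; lra.
  by apply: (eq_lincomb (binz_absorbr a (B%:Z + 1) B ltac:(ring))); ring.
have E2 : binz a (B%:Z - 1) = B%:R / (a%:R + B%:R) * Q.
  apply: eq_div_of_mul; first by apply/eqP; lra.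
  by apply: (eq_lincomb (eq0_mull (-1) (binz_absorbr a B _ erefl))); ring.
rewrite E1 E2 /fmom_var; clearbody Q; field.
by rewrite Q0 andbT; apply/and3P; split; apply/eqP => h; lra.
Qed.

Lemma fmom_var_ends_yy (A B : nat) : (2 <= A + B)%N ->
  fmom_var (fmom_cf 0 false false A B) (fmom_cf 1 false false A B)
           (fmom_cf 2 false false A B) =
  (A%:R + 1) * A%:R * (B%:R - 1) * B%:R / ((A%:R + B%:R) ^+ 2 * (A%:R + B%:R - 1)).
Proof.
rewrite /fmom_cf /=; case: B => [|b] AB.
  by rewrite Posz0B1 !binz_negr /fmom_var !(mulr0, mul0r, add0r) expr0n oppr0.
rewrite PoszSB1; set Q := binz A b.
have Q0 : Q != 0 by rewrite /Q binz_nat pnatr_eq0 -lt0n bin_gt0 leq_addr.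
have Ab1 : (1 <= A%:R + b%:R :> rat) by rewrite -natrD ler1n; lia.
have A0 : (0 <= A%:R :> rat) by rewrite ler0n.
have E1 : binz (A%:Z + 1) b = (A%:R + b%:R + 1) / (A%:R + 1) * Q.
  apply: eq_div_of_mul; first by apply/eqP; lra.
  by apply: (eq_lincomb (binz_absorbl (A%:Z + 1) b A ltac:(ring))); ring.
have E2 : binz (A%:Z - 1) b = A%:R / (A%:R + b%:R) * Q.
  apply: eq_div_of_mul; first by apply/eqP; lra.
  by apply: (eq_lincomb (eq0_mull (-1) (binz_absorbl A b _ erefl))); ring.
rewrite E1 E2 /fmom_var; clearbody Q; field.
by rewrite Q0 andbT; apply/and3P; split; apply/eqP => h; lra.
Qed.

Lemma fmom_var_ends_xy (A B : nat) : (2 <= A + B)%N ->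
  fmom_var (fmom_cf 0 true false A B) (fmom_cf 1 true false A B)
           (fmom_cf 2 true false A B) =
  B%:R ^+ 2 * A%:R ^+ 2 / ((A%:R + B%:R) ^+ 2 * (A%:R + B%:R - 1)).
Proof.
move=> AB; rewrite /fmom_cf /=; set Q := binz A B.
have Q0 : Q != 0 by rewrite /Q binz_nat pnatr_eq0 -lt0n bin_gt0 leq_addr.
have AB2 : (2 <= A%:R + B%:R :> rat) by rewrite -natrD ler_nat.
have E1 : binz A (B%:Z - 1) = B%:R / (A%:R + B%:R) * Q.
  apply: eq_div_of_mul; first by apply/eqP; lra.
  by apply: (eq_lincomb (eq0_mull (-1) (binz_absorbr A B _ erefl))); ring.
have E2 : binz A (B%:Z - 2) = (B%:R - 1) / (A%:R + B%:R - 1) * binz A (B%:Z - 1).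
  apply: eq_div_of_mul; first by apply/eqP; lra.
  by apply: (eq_lincomb (eq0_mull (-1) (binz_absorbr A (B%:Z - 1) (B%:Z - 2) ltac:(ring)))); ring.
rewrite E2 E1 /fmom_var; clearbody Q; field.
by rewrite Q0 andbT; apply/andP; split; apply/eqP => h; lra.
Qed.

Theorem lemma3 (n1 n2 : nat) :
  (1 <= n1)%N -> (1 <= n2)%N -> (3 < n1 + n2)%N ->
  let n : rat := (n1 + n2)%:R in
  let m1 : rat := n1%:R in
  let m2 : rat := n2%:R in
  let Egt := arrangements n1 n2 :&: [set s | (R2 s < R1 s)%N] in
  let Elt := arrangements n1 n2 :&: [set s | (R1 s < R2 s)%N] in
  let Eeq := arrangements n1 n2 :&: [set s | R1 s == R2 s] in
  [/\ (0 < #|Egt|)%N ->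
        cond_var Egt (@RM _) =
        m2 * (m2 - 1) * (m1 - 2) * (m1 - 1) / ((n - 2) ^+ 2 * (n - 3)),
      (0 < #|Elt|)%N ->
        cond_var Elt (@RM _) =
        m1 * (m1 - 1) * (m2 - 2) * (m2 - 1) / ((n - 2) ^+ 2 * (n - 3)) &
      (0 < #|Eeq|)%N ->
        cond_var Eeq (@RM _) =
        (m2 - 1) ^+ 2 * (m1 - 1) ^+ 2 / ((n - 2) ^+ 2 * (n - 3))].
Proof.
case: n1 => [//|A] _; case: n2 => [//|B] _ n3 n m1 m2 Egt Elt Eeq.
have AB : (2 <= A + B)%N by move: n3; rewrite addSn addnS.
have -> : n = A%:R + B%:R + 2 by rewrite /n addSn addnS -addn2 !natrD.
have -> : m1 = A%:R + 1 by rewrite /m1 -addn1 natrD.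
have -> : m2 = B%:R + 1 by rewrite /m2 -addn1 natrD.
split=> _.
- by rewrite cond_var_RM_gt fmom_var_ends_xx //; congr (_ / _); ring.
- by rewrite cond_var_RM_lt fmom_var_ends_yy //; congr (_ / _); ring.
- by rewrite cond_var_RM_eq fmom_var_ends_xy //; congr (_ / _); ring.
Qed.
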